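(* Let $\kappa,\lambda\in\mathbb{R}$, let ${\rm Y}$ be a locally ${\sf CAT}(\kappa)$ space and let ${\sf E}\colon{\rm Y}\to\mathbb{R}\cup\{+\infty\}$ be $\lambda$-convex and lower semicontinuous. Then for every $y\in D(-\partial^-{\sf E})$ \[ |\partial^-{\sf E}|(y)\le\inf_{v\in-\partial^-{\sf E}(y)}|v|_y . \] In particular $D(-\partial^-{\sf E})\subset D(|\partial^-{\sf E}|)$.
   Context: Locally ${\sf CAT}(\kappa)$ space: complete geodesic metric space $({\rm Y},{\sf d}_{\rm Y})$ in which each point has a neighbourhood that is ${\sf CAT}(\kappa)$ (geodesic triangles of perimeter $<2D_\kappa$ are thinner than comparison triangles in the model plane $\mathbb{M}_\kappa$ of constant curvature $\kappa$; $D_\kappa=\pi/\sqrt\kappa$ if $\kappa>0$, $\infty$ otherwise). Tangent cone ${\rm T}_y{\rm Y}$: completion of the space of constant speed geodesics $\gamma$ emanating from $y$ (defined on some $[0,\varepsilon)$), modulo ${\sf d}_y(\gamma,\eta):=\lim_{t\downarrow0}{\sf d}_{\rm Y}(\gamma_t,\eta_t)/t=0$, with distance ${\sf d}_y$; $\gamma'_0$ is the class of $\gamma$, $0_y$ that of the constant curve, $|v|_y:={\sf d}_y(v,0_y)$, $\langle v,w\rangle_y:=\frac12(|v|_y^2+|w|_y^2-{\sf d}_y^2(v,w))$. $\lambda$-convexity: ${\sf E}(\gamma_t)\le(1-t){\sf E}(\gamma_0)+t{\sf E}(\gamma_1)-\frac\lambda2t(1-t){\sf d}^2_{\rm Y}(\gamma_0,\gamma_1)$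 along every constant speed geodesic $\gamma\colon[0,1]\to{\rm Y}$; $D({\sf E})=\{{\sf E}<\infty\}$. Slope: $|\partial^-{\sf E}|(y):=\limsup_{z\to y}\frac{({\sf E}(y)-{\sf E}(z))^+}{{\sf d}_{\rm Y}(y,z)}$ for $y\in D({\sf E})$, and $D(|\partial^-{\sf E}|)$ is the set where it is finite. Minus-subdifferential: for $y\in D({\sf E})$, $-\partial^-{\sf E}(y)$ is the set of $v\in{\rm T}_y{\rm Y}$ such that for every $z\in{\rm Y}$ there is a geodesic $\gamma\colon[0,1]\to{\rm Y}$ from $y$ to $z$ with ${\sf E}(y)-\langle v,\gamma'_0\rangle_y+\frac\lambda2{\sf d}^2_{\rm Y}(y,z)\le{\sf E}(z)$; $D(-\partial^-{\sf E})$ is the set of $y$ where this set is nonempty. *)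

From Stdlib Require Import Reals Lra ClassicalEpsilon.
From Coquelicot Require Import Coquelicot.
Open Scope R_scope.
Set Implicit Arguments.

(* ---------- generic limits (values chosen by Hilbert epsilon; the limits
   exist in the situations where they are used) ---------- *)
Definition right_lim_is (f : R -> R) (l : R) : Prop :=
  forall eps, 0 < eps -> exists delta, 0 < delta /\
    forall t, 0 < t < delta -> Rabs (f t - l) < eps.
Definition right_lim0 (f : R -> R) : R := epsilon (inhabits 0) (right_lim_is f).
Definition seq_lim (u : nat -> R) : R := epsilon (inhabits 0) (Un_cv u).

Section Metric.
Variable Y : Type.
Variable d : Y -> Y -> R.

Definition is_metric : Prop :=
  (forall x y, d x y = 0 <-> x = y) /\
  (forall x y, d x y = d y x) /\
  (forall x y z, d x z <= d x y + d y z).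

Definition complete : Prop :=
  forall u : nat -> Y,
    (forall eps, 0 < eps -> exists N, forall m n, (N <= m)%nat -> (N <= n)%nat -> d (u m) (u n) < eps) ->
    exists l, forall eps, 0 < eps -> exists N, forall n, (N <= n)%nat -> d (u n) l < eps.

Definition geod (g : R -> Y) (a b : Y) : Prop :=
  g 0 = a /\ g 1 = b /\
  forall s t, 0 <= s <= 1 -> 0 <= t <= 1 -> d (g s) (g t) = Rabs (s - t) * d a b.

Definition geodesic_space : Prop := forall a b, exists g, geod g a b.

Definition lsc (E : Y -> Rbar) : Prop :=
  forall y (c : R), Rbar_lt (Finite c) (E y) ->
    exists delta, 0 < delta /\ forall z, d y z < delta -> Rbar_lt (Finite c) (E z).

(* lambda-convexity along every constant speed geodesic gamma : [0,1] -> Y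
   (trivial when an endpoint has infinite energy, hence stated for finite endpoints) *)
Definition lambda_convex (lam : R) (E : Y -> Rbar) : Prop :=
  forall g a b, geod g a b -> forall (ea eb : R), E a = Finite ea -> E b = Finite eb ->
    forall t, 0 <= t <= 1 ->
      Rbar_le (E (g t)) (Finite ((1 - t) * ea + t * eb - lam / 2 * t * (1 - t) * (d a b) ^ 2)).

(* kappa = 0 : plane x3 = 0 with Euclidean distance;
   kappa > 0 : sphere of radius 1/sqrt kappa with intrinsic distance;
   kappa < 0 : hyperboloid x1^2+x2^2-x3^2 = 1/kappa, x3 > 0, hyperbolic distance *)
Definition pt3 := (R * R * R)%type.
Definition arcosh (u : R) : R := ln (u + sqrt (u ^ 2 - 1)).

Definition model_pt (kappa : R) (x : pt3) : Prop :=
  let '(x1, x2, x3) := x in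
  (kappa = 0 /\ x3 = 0) \/
  (0 < kappa /\ x1 ^ 2 + x2 ^ 2 + x3 ^ 2 = 1 / kappa) \/
  (kappa < 0 /\ x1 ^ 2 + x2 ^ 2 - x3 ^ 2 = 1 / kappa /\ 0 < x3).

Definition model_dist (kappa : R) (x y : pt3) : R :=
  let '(x1, x2, x3) := x in let '(y1, y2, y3) := y in
  if Req_EM_T kappa 0 then sqrt ((x1 - y1) ^ 2 + (x2 - y2) ^ 2 + (x3 - y3) ^ 2)
  else if Rlt_dec 0 kappa then / sqrt kappa * acos (kappa * (x1 * y1 + x2 * y2 + x3 * y3))
  else / sqrt (- kappa) * arcosh (- kappa * (x3 * y3 - x1 * y1 - x2 * y2)).

(* p < D_kappa resp. p < 2 D_kappa, with D_kappa = pi/sqrt kappa (kappa>0), +oo otherwise *)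
Definition lt_Dk (kappa p : R) : Prop := kappa <= 0 \/ p < PI / sqrt kappa.
Definition lt_2Dk (kappa p : R) : Prop := kappa <= 0 \/ p < 2 * (PI / sqrt kappa).

Definition on_model_seg (kappa : R) (A B : pt3) (s : R) (X : pt3) : Prop :=
  model_pt kappa X /\ model_dist kappa A X = s * model_dist kappa A B /\
  model_dist kappa X B = (1 - s) * model_dist kappa A B.

Definition geod_in (U : Y -> Prop) (g : R -> Y) : Prop :=
  forall s, 0 <= s <= 1 -> U (g s).

(* every geodesic triangle in U (vertices p q r, sides g1 : p->q, g2 : q->r,
   g3 : r->p lying in U) with perimeter < 2 D_kappa is thinner than any comparison
   triangle P Q R in M_kappa *)
Definition tri_side (g1 g2 g3 : R -> Y) (P Q Rr : pt3) (k : nat) : (R -> Y) * pt3 * pt3 :=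
  match k with 0%nat => (g1, P, Q) | 1%nat => (g2, Q, Rr) | _ => (g3, Rr, P) end.

Definition CAT_set (kappa : R) (U : Y -> Prop) : Prop :=
  (forall a b, U a -> U b -> lt_Dk kappa (d a b) -> exists g, geod g a b /\ geod_in U g) /\
  (forall p q r g1 g2 g3,
     geod g1 p q -> geod g2 q r -> geod g3 r p ->
     geod_in U g1 -> geod_in U g2 -> geod_in U g3 ->
     lt_2Dk kappa (d p q + d q r + d r p) ->
     forall P Q Rr, model_pt kappa P -> model_pt kappa Q -> model_pt kappa Rr ->
       model_dist kappa P Q = d p q -> model_dist kappa Q Rr = d q r ->
       model_dist kappa Rr P = d r p ->
       forall k l s t X Z, (k < 3)%nat -> (l < 3)%nat -> 0 <= s <= 1 -> 0 <= t <= 1 ->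
         let '(g, A, B) := tri_side g1 g2 g3 P Q Rr k in
         let '(h, A', B') := tri_side g1 g2 g3 P Q Rr l in
         on_model_seg kappa A B s X -> on_model_seg kappa A' B' t Z ->
         d (g s) (h t) <= model_dist kappa X Z).

Definition locally_CAT (kappa : R) : Prop :=
  forall y, exists U : Y -> Prop, CAT_set kappa U /\
    exists r, 0 < r /\ forall z, d y z < r -> U z.

Definition germ (y : Y) (g : R -> Y) : Prop :=
  g 0 = y /\ exists eps c, 0 < eps /\ 0 <= c /\
    forall s t, 0 <= s < eps -> 0 <= t < eps -> d (g s) (g t) = c * Rabs (s - t).

Definition dgerm (g h : R -> Y) : R := right_lim0 (fun t => d (g t) (h t) / t).

(* elements of the completion T_y Y are represented by d_y-Cauchy sequences of
   geodesics emanating from y; the (pseudo)distance is the limit of distances *)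
Definition tvec (y : Y) (v : nat -> R -> Y) : Prop :=
  (forall n, germ y (v n)) /\
  (forall eps, 0 < eps -> exists N, forall m n, (N <= m)%nat -> (N <= n)%nat ->
     dgerm (v m) (v n) < eps).

Definition tdist (v w : nat -> R -> Y) : R := seq_lim (fun n => dgerm (v n) (w n)).
Definition tzero (y : Y) : nat -> R -> Y := fun _ _ => y.
Definition tnorm (y : Y) (v : nat -> R -> Y) : R := tdist v (tzero y).
Definition tinner (y : Y) (v w : nat -> R -> Y) : R :=
  / 2 * ((tnorm y v) ^ 2 + (tnorm y w) ^ 2 - (tdist v w) ^ 2).
Definition tclass (g : R -> Y) : nat -> R -> Y := fun _ => g.

Definition in_dom (E : Y -> Rbar) (y : Y) : Prop := is_finite (E y).

Definition slope_quot (E : Y -> Rbar) (y z : Y) : R :=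
  match E z with
  | Finite ez => Rmax 0 (real (E y) - ez) / d y z
  | _ => 0
  end.

(* |d^- E|(y) = limsup_{z -> y} (E(y)-E(z))^+ / d(y,z)
             = inf_{r>0} sup_{0<d(y,z)<r} ...   (the value 0 is included in the
   sup, which only matters at isolated points) *)
Definition slope (E : Y -> Rbar) (y : Y) : Rbar :=
  Glb_Rbar (fun s => exists r, 0 < r /\
     Lub_Rbar (fun q => q = 0 \/ exists z, 0 < d y z < r /\ q = slope_quot E y z) = Finite s).

Definition minus_subdiff (lam : R) (E : Y -> Rbar) (y : Y) (v : nat -> R -> Y) : Prop :=
  in_dom E y /\ tvec y v /\
  forall z, exists g, geod g y z /\
    Rbar_le (Finite (real (E y) - tinner y v (tclass g) + lam / 2 * (d y z) ^ 2)) (E z).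

Definition in_dom_subdiff (lam : R) (E : Y -> Rbar) (y : Y) : Prop :=
  in_dom E y /\ exists v, minus_subdiff lam E y v.

End Metric.

From Stdlib Require Import Reals Lra Psatz Lia Classical ClassicalEpsilon FunctionalExtensionality.
From Coquelicot Require Import Coquelicot.
Open Scope R_scope.

(** For [v] in the subdifferential and a geodesic [gamma] from [y] to [z],
    [E y - E z <= <v, gamma'_0> - lam/2 d(y,z)^2 <= |v| d(y,z) + |lam|/2 d(y,z)^2],
    so every difference quotient near [y] is at most [|v| + O(d(y,z))].  The middle step
    is Cauchy-Schwarz in the tangent cone, which amounts to the triangle inequality for
    [d_y]; the real issue is that [d_y] is a limit which has to exist.  This is where the
    curvature bound enters: comparing the triangle [y, gamma_t, eta_t] with its model
    triangle shows that [d(gamma_t, eta_t)/t] is nonincreasing up to an error [o(1)] as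
    [t] decreases to [0], hence converges.  The model estimate is a perturbation of the
    Euclidean law of cosines, done uniformly for the plane, the sphere and the hyperbolic
    plane. *)

(** * Elementary estimates *)

Lemma nondecreasing_of_derive_nonneg (f df : R -> R) a b : a <= b ->
  (forall x, a <= x <= b -> is_derive f x (df x)) ->
  (forall x, a <= x <= b -> 0 <= df x) -> f a <= f b.
Proof.
  intros Hab Hd Hpos.
  destruct (MVT_gen f a b df) as [c [Hc Hmvt]];
    rewrite ?Rmin_left, ?Rmax_right in * by lra.
  - intros x Hx. apply Hd. lra.
  - intros x Hx. apply derivable_continuous_pt. exists (df x).
    apply is_derive_Reals, Hd. lra.
  - specialize (Hpos c Hc). nra.
Qed.

Lemma le_of_derive_le (f g df dg : R -> R) x : 0 <= x -> f 0 <= g 0 ->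
  (forall z : R, is_derive f z (df z)) -> (forall z : R, is_derive g z (dg z)) ->
  (forall z, 0 <= z <= x -> df z <= dg z) -> f x <= g x.
Proof.
  intros Hx H0 Hf Hg Hd.
  enough (g 0 - f 0 <= g x - f x) by lra.
  apply (nondecreasing_of_derive_nonneg (fun z => g z - f z) (fun z => dg z - df z)); auto.
  - intros z _. exact (is_derive_minus g f z (dg z) (df z) (Hg z) (Hf z)).
  - intros z Hz. specialize (Hd z Hz). lra.
Qed.

Lemma is_derive_cosh x : is_derive cosh x (sinh x).
Proof. apply is_derive_Reals, derivable_pt_lim_cosh. Qed.

Lemma is_derive_sinh x : is_derive sinh x (cosh x).
Proof. apply is_derive_Reals, derivable_pt_lim_sinh. Qed.

Lemma cosh_opp x : cosh (- x) = cosh x.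
Proof. unfold cosh. rewrite Ropp_involutive. lra. Qed.

Lemma cosh_abs x : cosh (Rabs x) = cosh x.
Proof. unfold Rabs. destruct (Rcase_abs x); [apply cosh_opp | reflexivity]. Qed.

Lemma cosh_plus_sub_cosh_minus x y : cosh (x + y) = cosh (x - y) + 2 * (sinh x * sinh y).
Proof.
  unfold cosh, sinh, Rminus. rewrite !Ropp_plus_distr, Ropp_involutive, !exp_plus. field.
Qed.

Lemma cosh_minus x y : cosh (x - y) = cosh x * cosh y - sinh x * sinh y.
Proof.
  unfold cosh, sinh, Rminus. rewrite Ropp_plus_distr, Ropp_involutive, !exp_plus. field.
Qed.

Lemma cosh_sq_sub_sinh_sq x : cosh x ^ 2 - sinh x ^ 2 = 1.
Proof. unfold cosh, sinh. rewrite exp_Ropp. field. apply Rgt_not_eq, exp_pos. Qed.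

Lemma sinh_pos x : 0 < x -> 0 < sinh x.
Proof. intros Hx. rewrite <- sinh_0. now apply sinh_lt. Qed.

Lemma sinh_nonneg x : 0 <= x -> 0 <= sinh x.
Proof. intros [Hx | <-]; [left; now apply sinh_pos | rewrite sinh_0; lra]. Qed.

Lemma cosh_le_cosh x y : 0 <= x <= y -> cosh x <= cosh y.
Proof.
  intros Hxy. apply (nondecreasing_of_derive_nonneg cosh sinh); try lra.
  - intros z _. apply is_derive_cosh.
  - intros z Hz. apply sinh_nonneg. lra.
Qed.

Lemma cosh_ge_1 x : 1 <= cosh x.
Proof. rewrite <- cosh_abs, <- cosh_0. apply cosh_le_cosh. split; [lra | apply Rabs_pos]. Qed.

Lemma sinh_ge_id x : 0 <= x -> x <= sinh x.
Proof.
  intros Hx. apply (le_of_derive_le (fun z => z) sinh (fun _ => 1) cosh); auto.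
  - rewrite sinh_0. lra.
  - intros z. auto_derive; auto.
  - apply is_derive_sinh.
  - intros z _. apply cosh_ge_1.
Qed.

Lemma cosh_ge_quadratic x : 0 <= x -> 1 + x ^ 2 / 2 <= cosh x.
Proof.
  intros Hx. apply (le_of_derive_le (fun z => 1 + z ^ 2 / 2) cosh (fun z => z) sinh); auto.
  - rewrite cosh_0. lra.
  - intros z. auto_derive; auto; field.
  - apply is_derive_cosh.
  - intros z Hz. apply sinh_ge_id. lra.
Qed.

Lemma cosh_le_2 x : 0 <= x <= 1 -> cosh x <= 2.
Proof.
  intros Hx. apply Rle_trans with (cosh 1); [apply cosh_le_cosh; lra |].
  pose proof (exp_increasing (Ropp 1) 0 ltac:(lra)) as He. rewrite exp_0 in He.
  pose proof exp_le_3. unfold cosh. lra.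
Qed.

Lemma sinh_le_twice x : 0 <= x <= 1 -> sinh x <= 2 * x.
Proof.
  intros Hx. apply (le_of_derive_le sinh (fun z => 2 * z) cosh (fun _ => 2)); try lra.
  - rewrite sinh_0. lra.
  - apply is_derive_sinh.
  - intros z. auto_derive; auto; field.
  - intros z Hz. apply cosh_le_2. lra.
Qed.

Lemma cosh_le_1_add_sq x : 0 <= x <= 1 -> cosh x <= 1 + x ^ 2.
Proof.
  intros Hx. apply (le_of_derive_le cosh (fun z => 1 + z ^ 2) sinh (fun z => 2 * z)); try lra.
  - rewrite cosh_0. lra.
  - apply is_derive_cosh.
  - intros z. auto_derive; auto; field.
  - intros z Hz. apply sinh_le_twice. lra.
Qed.

Lemma sinh_le_cubic x : 0 <= x <= 1 -> sinh x <= x + x ^ 3 / 3.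
Proof.
  intros Hx.
  apply (le_of_derive_le sinh (fun z => z + z ^ 3 / 3) cosh (fun z => 1 + z ^ 2)); try lra.
  - rewrite sinh_0. lra.
  - apply is_derive_sinh.
  - intros z. auto_derive; auto; field.
  - intros z Hz. apply cosh_le_1_add_sq. lra.
Qed.

Lemma cosh_le_quartic x : 0 <= x <= 1 -> cosh x <= 1 + x ^ 2 / 2 + x ^ 4 / 12.
Proof.
  intros Hx.
  apply (le_of_derive_le cosh (fun z => 1 + z ^ 2 / 2 + z ^ 4 / 12) sinh (fun z => z + z ^ 3 / 3));
    try lra.
  - rewrite cosh_0. lra.
  - apply is_derive_cosh.
  - intros z. auto_derive; auto; field.
  - intros z Hz. apply sinh_le_cubic. lra.
Qed.

Lemma arcosh_cosh x : 0 <= x -> arcosh (cosh x) = x.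
Proof.
  intros Hx. unfold arcosh.
  replace (cosh x ^ 2 - 1) with (sinh x ^ 2) by (pose proof (cosh_sq_sub_sinh_sq x); lra).
  rewrite sqrt_pow2 by (now apply sinh_nonneg).
  replace (cosh x + sinh x) with (exp x) by (unfold cosh, sinh; field).
  apply ln_exp.
Qed.

Lemma arcosh_le u v : 1 <= u <= v -> arcosh u <= arcosh v.
Proof.
  intros Huv. unfold arcosh.
  assert (sqrt (u ^ 2 - 1) <= sqrt (v ^ 2 - 1)) by (apply sqrt_le_1_alt; nra).
  pose proof (sqrt_pos (u ^ 2 - 1)).
  destruct (Req_dec (u + sqrt (u ^ 2 - 1)) (v + sqrt (v ^ 2 - 1))) as [-> | Hne]; [lra |].
  left. apply ln_increasing; lra.
Qed.

Lemma cos_bounds z : Rabs z <= 1 -> 1 - z ^ 2 / 2 <= cos z <= 1 - z ^ 2 / 2 + z ^ 4 / 24.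
Proof.
  intros Hz. apply Rabs_le_between in Hz. pose proof PI2_1.
  destruct (cos_bound z 0) as [Hlow Hup]; try lra.
  unfold cos_approx, cos_term in Hlow, Hup. simpl in Hlow, Hup. lra.
Qed.

Lemma sin_bounds r : 0 <= r <= 1 -> r - r ^ 3 / 6 <= sin r <= r.
Proof.
  intros Hr. pose proof PI2_1.
  destruct (sin_bound r 0) as [Hlow Hup]; try lra.
  unfold sin_approx, sin_term in Hlow, Hup. simpl in Hlow, Hup.
  assert (r ^ 5 <= r ^ 3).
  { assert (0 <= r ^ 3) by (apply pow_le; lra). assert (r ^ 2 <= 1) by nra.
    replace (r ^ 5) with (r ^ 3 * r ^ 2) by ring. nra. }
  lra.
Qed.

Lemma acos_le_of_cos_le x th : -1 <= x <= 1 -> 0 <= th <= PI -> cos th <= x -> acos x <= th.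
Proof.
  intros Hx Hth Hcos. destruct (Rle_lt_dec (acos x) th) as [| Hlt]; [assumption |].
  pose proof (acos_bound x).
  pose proof (cos_decreasing_1 th (acos x) ltac:(lra) ltac:(lra) ltac:(lra) ltac:(lra) Hlt).
  rewrite cos_acos in * by lra. lra.
Qed.

(** * Small triangles in the model planes *)

(** In the model plane of curvature 0, 1 or -1 the law of cosines for a triangle with
    sides [A], [B] enclosing the angle [gamma], and third side [C], reads
    [F C = F (A - B) + S A * S B * (1 - cos gamma)], with [F z] equal to [z^2/2],
    [1 - cos z], [cosh z - 1] and [S] equal to [id], [sin], [sinh]; [G] inverts [F] on
    nonnegative arguments. *)
Record cosine_profile (F S G : R -> R) : Prop := {
  profile_quadratic : forall z, Rabs z <= 1 -> Rabs (F z - z ^ 2 / 2) <= z ^ 4 / 6;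
  profile_even : forall z, F (- z) = F z;
  profile_mono : forall x y, 0 <= x <= y -> y <= 1 -> F x <= F y;
  profile_add : forall A B, F (A + B) = F (A - B) + 2 * (S A * S B);
  profile_S_pos : forall r, 0 < r <= 1 -> 0 < S r;
  profile_S_ratio : forall sg r, 0 <= sg <= 1 -> 0 <= r <= 1 ->
    S (sg * r) <= sg * (1 + r ^ 2 / 3) * S r;
  profile_inv : forall z, Rabs z <= 1 -> G (F z) = Rabs z;
  profile_inv_le : forall x th, 0 <= x -> 0 <= th <= 1 -> x <= F th -> G x <= th }.

Lemma shrink_polynomial_bound s u C dl : 0 < s -> Rabs u <= C <= s -> 0 <= dl ->
  2 * (s + dl) ^ 2 <= dl ->
  u ^ 2 + u ^ 4 / 3 + (1 + s ^ 2) * (C ^ 2 - u ^ 2) + (1 + s ^ 2) * (C ^ 4 + u ^ 4) / 3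
    + (C + dl) ^ 4 / 3 <= (C + dl) ^ 2.
Proof.
  intros Hs HC Hdl Hsmall. pose proof (Rabs_pos u).
  assert (Hsd : s + dl <= 1 / 2) by nra.
  assert (Hquart : 3 * (s + dl) ^ 4 <= dl ^ 2).
  { assert (0 <= (s + dl) ^ 2 <= dl / 2) by (split; [apply pow2_ge_0 | lra]).
    replace ((s + dl) ^ 4) with (((s + dl) ^ 2) ^ 2) by ring. nra. }
  assert (Hu : u ^ 2 <= C ^ 2) by (rewrite <- (pow2_abs u); apply pow_incr; lra).
  assert (HCs : C ^ 2 <= s ^ 2) by (apply pow_incr; lra).
  assert (Hs4 : s ^ 4 <= (s + dl) ^ 4) by (apply pow_incr; lra).
  assert (HCdl : (C + dl) ^ 4 <= (s + dl) ^ 4) by (apply pow_incr; lra).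
  assert (HC4 : C ^ 4 <= s ^ 4).
  { replace (C ^ 4) with ((C ^ 2) ^ 2) by ring. replace (s ^ 4) with ((s ^ 2) ^ 2) by ring.
    apply pow_incr; nra. }
  assert (Hu4 : u ^ 4 <= C ^ 4).
  { replace (u ^ 4) with ((u ^ 2) ^ 2) by ring. replace (C ^ 4) with ((C ^ 2) ^ 2) by ring.
    apply pow_incr; nra. }
  assert (Hss : s ^ 2 <= 1 / 4) by nra.
  assert (Hcross : 0 <= C * dl) by nra.
  assert (H1 : s ^ 2 * (C ^ 2 - u ^ 2) <= s ^ 4).
  { replace (s ^ 4) with (s ^ 2 * s ^ 2) by ring. apply Rmult_le_compat_l; nra. }
  assert (H2 : (1 + s ^ 2) * (C ^ 4 + u ^ 4) <= 5 / 4 * (2 * s ^ 4)).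
  { apply Rmult_le_compat; nra. }
  replace ((C + dl) ^ 2) with (C ^ 2 + dl ^ 2 + 2 * (C * dl)) by ring.
  pose proof (pow2_ge_0 dl). lra.
Qed.

Section Profile.
Variables F S G : R -> R.
Hypothesis HP : cosine_profile F S G.

Lemma profile_bounds z : Rabs z <= 1 ->
  z ^ 2 / 2 - z ^ 4 / 6 <= F z <= z ^ 2 / 2 + z ^ 4 / 6.
Proof.
  intros Hz. pose proof (profile_quadratic _ _ _ HP z Hz) as H.
  apply Rabs_le_between in H. lra.
Qed.

Lemma profile_nonneg z : Rabs z <= 1 -> 0 <= F z.
Proof.
  intros Hz. destruct (profile_bounds z Hz) as [Hlow _].
  assert (z ^ 2 <= 1) by (rewrite <- (pow2_abs z); pose proof (Rabs_pos z); nra). nra.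
Qed.

Lemma profile_angle_weight A B C : 0 < A -> 0 < B -> Rabs (A - B) <= C <= A + B -> A + B <= 1 ->
  let w := (F C - F (A - B)) / (S A * S B) in
  0 <= w <= 2 /\ F C = F (A - B) + S A * S B * w.
Proof.
  intros HA HB HC Hs w.
  assert (HSA : 0 < S A) by (apply (profile_S_pos _ _ _ HP); lra).
  assert (HSB : 0 < S B) by (apply (profile_S_pos _ _ _ HP); lra).
  assert (Habs : F (A - B) = F (Rabs (A - B))).
  { unfold Rabs.
    destruct (Rcase_abs (A - B)); [now rewrite (profile_even _ _ _ HP) | reflexivity]. }
  assert (Hlow : F (A - B) <= F C).
  { rewrite Habs. apply (profile_mono _ _ _ HP); [split; [apply Rabs_pos |] |]; lra. }
  assert (Hup : F C <= F (A - B) + 2 * (S A * S B)).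
  { rewrite <- (profile_add _ _ _ HP). apply (profile_mono _ _ _ HP); [split |]; try lra.
    pose proof (Rabs_pos (A - B)). lra. }
  assert (Hid : S A * S B * w = F C - F (A - B)) by (unfold w; field; lra).
  split; [split |]; [| | lra]; apply (Rmult_le_reg_l (S A * S B)); nra.
Qed.

Lemma profile_S_prod_le A B sg : 0 < A -> 0 < B -> A + B <= 1 -> 0 < sg < 1 ->
  0 < S (sg * A) * S (sg * B) <= sg ^ 2 * (1 + (A + B) ^ 2) * (S A * S B).
Proof.
  intros HA HB Hs Hsg.
  assert (HSA : 0 < S A) by (apply (profile_S_pos _ _ _ HP); lra).
  assert (HSB : 0 < S B) by (apply (profile_S_pos _ _ _ HP); lra).
  assert (HSsA : 0 < S (sg * A)) by (apply (profile_S_pos _ _ _ HP); nra).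
  assert (HSsB : 0 < S (sg * B)) by (apply (profile_S_pos _ _ _ HP); nra).
  pose proof (profile_S_ratio _ _ _ HP sg A ltac:(lra) ltac:(lra)) as HrA.
  pose proof (profile_S_ratio _ _ _ HP sg B ltac:(lra) ltac:(lra)) as HrB.
  assert (Hcoef : (1 + A ^ 2 / 3) * (1 + B ^ 2 / 3) <= 1 + (A + B) ^ 2)
    by (assert (0 <= A * B <= 1) by nra; nra).
  split; [nra |].
  apply Rle_trans with ((sg * (1 + A ^ 2 / 3) * S A) * (sg * (1 + B ^ 2 / 3) * S B)).
  - apply Rmult_le_compat; lra.
  - replace ((sg * (1 + A ^ 2 / 3) * S A) * (sg * (1 + B ^ 2 / 3) * S B))
      with (sg ^ 2 * ((1 + A ^ 2 / 3) * (1 + B ^ 2 / 3)) * (S A * S B)) by ring.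
    apply Rmult_le_compat_r; [nra |]. apply Rmult_le_compat_l; nra.
Qed.

(** Shrinking both sides at the vertex by the factor [sg] while keeping the angle
    shrinks the third side by at most [sg (C + dl)], provided the triangle is small
    compared to [dl]. *)
Lemma profile_shrink A B C dl sg w : 0 < A -> 0 < B -> Rabs (A - B) <= C <= A + B ->
  0 <= dl -> 2 * (A + B + dl) ^ 2 <= dl -> 0 < sg < 1 -> 0 <= w ->
  F C = F (A - B) + S A * S B * w ->
  F (sg * A - sg * B) + S (sg * A) * S (sg * B) * w <= F (sg * (C + dl)).
Proof.
  intros HA HB HC Hdl Hsmall Hsg Hw Hlaw.
  pose proof (Rabs_pos (A - B)).
  pose proof (shrink_polynomial_bound (A + B) (A - B) C dl ltac:(lra) HC Hdl Hsmall) as Hkey.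
  assert (Hsd : A + B + dl <= 1 / 2) by nra.
  destruct (profile_S_prod_le A B sg HA HB ltac:(lra) Hsg) as [_ Hprod].
  assert (Hweight : S A * S B * w <= (C ^ 2 - (A - B) ^ 2) / 2 + (C ^ 4 + (A - B) ^ 4) / 6).
  { pose proof (profile_bounds C ltac:(rewrite Rabs_right; lra)).
    pose proof (profile_bounds (A - B) ltac:(lra)). lra. }
  assert (HFu : F (sg * (A - B)) <= sg ^ 2 * (A - B) ^ 2 / 2 + sg ^ 4 * (A - B) ^ 4 / 6).
  { assert (Hsu : Rabs (sg * (A - B)) <= 1)
      by (rewrite Rabs_mult, (Rabs_right sg) by lra; nra).
    destruct (profile_bounds _ Hsu) as [_ H']. now rewrite !Rpow_mult_distr in H'. }
  assert (HFC : sg ^ 2 * (C + dl) ^ 2 / 2 - sg ^ 4 * (C + dl) ^ 4 / 6 <= F (sg * (C + dl))).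
  { assert (HsC : Rabs (sg * (C + dl)) <= 1).
    { rewrite Rabs_right by (apply Rle_ge, Rmult_le_pos; lra).
      apply Rle_trans with (1 * (C + dl)); [apply Rmult_le_compat_r |]; lra. }
    destruct (profile_bounds _ HsC) as [H' _]. now rewrite !Rpow_mult_distr in H'. }
  assert (Hsg2 : 0 <= sg ^ 2 <= 1) by (split; [apply pow2_ge_0 | nra]).
  assert (Hsg4 : sg ^ 4 <= sg ^ 2) by (replace (sg ^ 4) with (sg ^ 2 * sg ^ 2) by ring; nra).
  assert (Hu4 : 0 <= (A - B) ^ 4)
    by (replace ((A - B) ^ 4) with (((A - B) ^ 2) ^ 2) by ring; apply pow2_ge_0).
  assert (HCd4 : 0 <= (C + dl) ^ 4)
    by (replace ((C + dl) ^ 4) with (((C + dl) ^ 2) ^ 2) by ring; apply pow2_ge_0).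
  replace (sg * A - sg * B) with (sg * (A - B)) by ring.
  assert (S (sg * A) * S (sg * B) * w <= sg ^ 2 * (1 + (A + B) ^ 2) * (S A * S B * w)).
  { rewrite <- Rmult_assoc. apply Rmult_le_compat_r; lra. }
  assert (sg ^ 2 * (1 + (A + B) ^ 2) * (S A * S B * w)
          <= sg ^ 2 * (1 + (A + B) ^ 2) * ((C ^ 2 - (A - B) ^ 2) / 2 + (C ^ 4 + (A - B) ^ 4) / 6))
    by (apply Rmult_le_compat_l; nra).
  nra.
Qed.

End Profile.

(** [pt th k q] is the point at rescaled distance [th] from a fixed base point, in the
    direction with coordinates [(k, q)] in the tangent plane there; [rho] is the
    curvature radius, so actual distances are [rho] times rescaled ones. *)
Record model_chart (kappa rho : R) (F S G : R -> R) (pt : R -> R -> R -> pt3) : Prop := {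
  chart_rho_pos : 0 < rho;
  chart_model_pt : forall th k q, k ^ 2 + q ^ 2 = 1 -> model_pt kappa (pt th k q);
  chart_origin : forall k q, pt 0 k q = pt 0 1 0;
  chart_dist : forall th th' k q k' q', k ^ 2 + q ^ 2 = 1 -> k' ^ 2 + q' ^ 2 = 1 ->
    model_dist kappa (pt th k q) (pt th' k' q')
    = rho * G (F (th - th') + S th * S th' * (1 - (k * k' + q * q'))) }.

Definition comparison_triangles_below (kappa a b eps tau : R) : Prop :=
  forall t c sg, 0 < t < tau -> Rabs (a - b) * t <= c <= (a + b) * t -> 0 < sg < 1 ->
    exists P Q Rr X Z, model_pt kappa P /\ model_pt kappa Q /\ model_pt kappa Rr /\
      model_dist kappa P Q = a * t /\ model_dist kappa Q Rr = c /\ model_dist kappa Rr P = b * t /\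
      on_model_seg kappa P Q sg X /\ on_model_seg kappa Rr P (1 - sg) Z /\
      model_dist kappa X Z <= sg * (c + eps * t).

Definition small_comparison_triangles (kappa a b eps : R) : Prop :=
  exists tau, 0 < tau /\ comparison_triangles_below kappa a b eps tau.

Section Chart.
Variables (kappa rho : R) (F S G : R -> R) (pt : R -> R -> R -> pt3).
Hypotheses (HP : cosine_profile F S G) (HC : model_chart kappa rho F S G pt).

Lemma chart_ray_dist th th' k q : k ^ 2 + q ^ 2 = 1 -> 0 <= th' <= th -> th <= 1 ->
  model_dist kappa (pt th k q) (pt th' k q) = rho * (th - th') /\
  model_dist kappa (pt th' k q) (pt th k q) = rho * (th - th').
Proof.
  intros Hkq Hth Hth1.
  rewrite !(chart_dist _ _ _ _ _ _ HC) by assumption.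
  replace (k * k + q * q) with 1 by (rewrite <- Hkq; ring).
  rewrite Rminus_diag, !Rmult_0_r, !Rplus_0_r.
  rewrite !(profile_inv _ _ _ HP) by (apply Rabs_le_between; lra).
  split; [| rewrite Rabs_minus_sym]; now rewrite Rabs_right by lra.
Qed.

Lemma chart_shrunk_dist A B C dl sg w q : 0 < A -> 0 < B -> Rabs (A - B) <= C <= A + B ->
  0 <= dl -> 2 * (A + B + dl) ^ 2 <= dl -> 0 < sg < 1 -> 0 <= w ->
  (1 - w) ^ 2 + q ^ 2 = 1 -> F C = F (A - B) + S A * S B * w ->
  model_dist kappa (pt (sg * A) 1 0) (pt (sg * B) (1 - w) q) <= rho * (sg * (C + dl)).
Proof.
  intros HA HB HCAB Hdl Hsmall Hsg Hw Hkq Hlaw.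
  pose proof (chart_rho_pos _ _ _ _ _ _ HC) as Hrho.
  assert (Hsd : A + B + dl <= 1 / 2) by nra.
  rewrite (chart_dist _ _ _ _ _ _ HC) by (auto; ring).
  replace (1 - (1 * (1 - w) + 0 * q)) with w by ring.
  apply Rmult_le_compat_l; [lra |]. apply (profile_inv_le _ _ _ HP).
  - destruct (profile_S_prod_le F S G HP A B sg HA HB ltac:(lra) Hsg) as [Hpos _].
    assert (0 <= F (sg * A - sg * B)).
    { apply (profile_nonneg F S G HP). rewrite Rabs_le_between. nra. }
    nra.
  - pose proof (Rabs_pos (A - B)). split; nra.
  - now apply (profile_shrink F S G HP A B C dl sg w).
Qed.

Lemma chart_comparison_triangle A B C dl sg : 0 < A -> 0 < B -> Rabs (A - B) <= C <= A + B ->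
  0 < dl -> 2 * (A + B + dl) ^ 2 <= dl -> 0 < sg < 1 ->
  exists P Q Rr X Z, model_pt kappa P /\ model_pt kappa Q /\ model_pt kappa Rr /\
    model_dist kappa P Q = rho * A /\ model_dist kappa Q Rr = rho * C /\
    model_dist kappa Rr P = rho * B /\
    on_model_seg kappa P Q sg X /\ on_model_seg kappa Rr P (1 - sg) Z /\
    model_dist kappa X Z <= rho * (sg * (C + dl)).
Proof.
  intros HA HB HCAB Hdl Hsmall Hsg.
  assert (Hsd : A + B + dl <= 1 / 2) by nra.
  assert (HC0 : 0 <= C) by (pose proof (Rabs_pos (A - B)); lra).
  destruct (profile_angle_weight F S G HP A B C HA HB HCAB ltac:(lra)) as [Hw Hlaw].
  set (w := (F C - F (A - B)) / (S A * S B)) in *.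
  (* [1 - w] is the cosine of the angle at the vertex [pt 0 1 0]. *)
  set (q := sqrt (1 - (1 - w) ^ 2)).
  assert (Hkq : (1 - w) ^ 2 + q ^ 2 = 1).
  { unfold q. rewrite pow2_sqrt; [ring |].
    replace (1 - (1 - w) ^ 2) with (w * (2 - w)) by ring. apply Rmult_le_pos; lra. }
  assert (H10 : 1 ^ 2 + 0 ^ 2 = 1) by ring.
  destruct (chart_ray_dist A 0 1 0 H10 ltac:(lra) ltac:(lra)) as [_ HPQ].
  destruct (chart_ray_dist (sg * A) 0 1 0 H10 ltac:(nra) ltac:(nra)) as [_ HPX].
  destruct (chart_ray_dist A (sg * A) 1 0 H10 ltac:(nra) ltac:(nra)) as [_ HXQ].
  destruct (chart_ray_dist B 0 _ _ Hkq ltac:(lra) ltac:(lra)) as [HRP _].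
  destruct (chart_ray_dist B (sg * B) _ _ Hkq ltac:(nra) ltac:(nra)) as [HRZ _].
  destruct (chart_ray_dist (sg * B) 0 _ _ Hkq ltac:(nra) ltac:(nra)) as [HZP _].
  rewrite (chart_origin _ _ _ _ _ _ HC) in HRP, HZP.
  pose proof (chart_model_pt _ _ _ _ _ _ HC) as HPt.
  exists (pt 0 1 0), (pt A 1 0), (pt B (1 - w) q), (pt (sg * A) 1 0), (pt (sg * B) (1 - w) q).
  repeat split; auto.
  - rewrite HPQ. f_equal. ring.
  - rewrite (chart_dist _ _ _ _ _ _ HC) by auto.
    replace (1 - (1 * (1 - w) + 0 * q)) with w by ring.
    rewrite <- Hlaw, (profile_inv _ _ _ HP), Rabs_right by (try rewrite Rabs_right; lra).
    reflexivity.
  - rewrite HRP. f_equal. ring.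
  - rewrite HPX, HPQ. ring.
  - rewrite HXQ, HPQ. ring.
  - rewrite HRZ, HRP. ring.
  - rewrite HZP, HRP. ring.
  - now apply (chart_shrunk_dist A B C dl sg w q); try lra.
Qed.

Lemma chart_small_comparison a b eps : 0 < a -> 0 < b -> 0 < eps ->
  small_comparison_triangles kappa a b eps.
Proof.
  intros Ha Hb Heps. pose proof (chart_rho_pos _ _ _ _ _ _ HC) as Hrho.
  set (L := a + b + eps). assert (HL : 0 < L) by (unfold L; lra).
  exists (eps * rho / (2 * L ^ 2)). split; [apply Rdiv_lt_0_compat; nra |].
  intros t c sg Ht Hc Hsg.
  set (T := t / rho).
  assert (HT : 0 < T) by (apply Rdiv_lt_0_compat; lra).
  assert (Hsmall : 2 * (a * T + b * T + eps * T) ^ 2 <= eps * T).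
  { assert (Ht' : t * (2 * L ^ 2) < eps * rho) by (apply Rlt_div_r; [nra | lra]).
    assert (HTL : T * (2 * L ^ 2) < eps).
    { unfold T. replace (t / rho * (2 * L ^ 2)) with (t * (2 * L ^ 2) / rho) by (field; lra).
      apply Rlt_div_l; lra. }
    replace (a * T + b * T + eps * T) with (T * L) by (unfold L; ring). nra. }
  assert (HCAB : Rabs (a * T - b * T) <= c / rho <= a * T + b * T).
  { unfold T. replace (a * (t / rho) - b * (t / rho)) with ((a - b) * t / rho) by (field; lra).
    replace (a * (t / rho) + b * (t / rho)) with ((a + b) * t / rho) by (field; lra).
    rewrite Rabs_div, (Rabs_right rho), Rabs_mult, (Rabs_right t) by lra.
    unfold Rdiv. split; apply Rmult_le_compat_r; try (left; apply Rinv_0_lt_compat); lra. }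
  destruct (chart_comparison_triangle (a * T) (b * T) (c / rho) (eps * T) sg
              ltac:(nra) ltac:(nra) HCAB ltac:(nra) Hsmall Hsg)
    as [P [Q [Rr [X [Z [HPm [HQm [HRm [HPQ [HQR [HRP [HX [HZ HXZ]]]]]]]]]]]]].
  exists P, Q, Rr, X, Z. unfold T in *.
  replace (rho * (a * (t / rho))) with (a * t) in HPQ by (field; lra).
  replace (rho * (c / rho)) with c in HQR by (field; lra).
  replace (rho * (b * (t / rho))) with (b * t) in HRP by (field; lra).
  replace (rho * (sg * (c / rho + eps * (t / rho)))) with (sg * (c + eps * t)) in HXZ
    by (field; lra).
  tauto.
Qed.

End Chart.

Lemma flat_profile : cosine_profile (fun z => z ^ 2 / 2) (fun z => z) (fun x => sqrt (2 * x)).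
Proof.
  split; cbv beta.
  - intros z _. rewrite Rminus_diag, Rabs_R0.
    replace (z ^ 4) with ((z ^ 2) ^ 2) by ring. pose proof (pow2_ge_0 (z ^ 2)). lra.
  - intros z. field.
  - intros x y Hxy _. assert (x ^ 2 <= y ^ 2) by (apply pow_incr; lra). lra.
  - intros A B. field.
  - intros r Hr. lra.
  - intros sg r Hsg Hr.
    assert (0 <= sg * r ^ 3) by (apply Rmult_le_pos; [lra | apply pow_le; lra]). lra.
  - intros z _. replace (2 * (z ^ 2 / 2)) with (Rsqr z) by (unfold Rsqr; field).
    apply sqrt_Rsqr_abs.
  - intros x th Hx Hth Hle. rewrite <- (sqrt_pow2 th) by lra. apply sqrt_le_1_alt. lra.
Qed.

Lemma sphere_profile : cosine_profile (fun z => 1 - cos z) sin (fun x => acos (1 - x)).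
Proof.
  pose proof PI2_1. split; cbv beta.
  - intros z Hz. apply Rabs_le_between. pose proof (cos_bounds z Hz).
    replace (z ^ 4) with ((z ^ 2) ^ 2) by ring. pose proof (pow2_ge_0 (z ^ 2)). lra.
  - intros z. now rewrite cos_neg.
  - intros x y [Hx [Hlt | <-]] Hy; [| lra].
    pose proof (cos_decreasing_1 x y ltac:(lra) ltac:(lra) ltac:(lra) ltac:(lra) Hlt). lra.
  - intros A B. rewrite cos_plus, cos_minus. ring.
  - intros r Hr. apply sin_gt_0; lra.
  - intros sg r Hsg Hr. destruct (sin_bounds (sg * r)) as [_ Hup]; [nra |].
    destruct (sin_bounds r Hr) as [Hlow _].
    apply Rle_trans with (sg * r); [assumption |].
    apply Rle_trans with (sg * ((1 + r ^ 2 / 3) * (r - r ^ 3 / 6))).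
    + apply Rmult_le_compat_l; [lra |].
      assert (0 <= r ^ 3 * (3 - r ^ 2)) by (apply Rmult_le_pos; [apply pow_le |]; nra).
      lra.
    + rewrite Rmult_assoc. apply Rmult_le_compat_l; [lra |].
      apply Rmult_le_compat_l; [nra | lra].
  - intros z Hz. replace (1 - (1 - cos z)) with (cos (Rabs z)).
    + apply acos_cos. pose proof (Rabs_pos z). lra.
    + unfold Rabs. destruct (Rcase_abs z); [rewrite cos_neg |]; ring.
  - intros x th Hx Hth Hle. pose proof (COS_bound th).
    apply acos_le_of_cos_le; lra.
Qed.

Lemma hyperbolic_profile :
  cosine_profile (fun z => cosh z - 1) sinh (fun x => arcosh (1 + x)).
Proof.
  split; cbv beta.
  - intros z Hz. pose proof (Rabs_pos z).
    assert (Hz2 : z ^ 2 = Rabs z ^ 2) by (now rewrite pow2_abs).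
    assert (Hz4 : z ^ 4 = (Rabs z ^ 2) ^ 2) by (rewrite <- Hz2; ring).
    pose proof (cosh_ge_quadratic (Rabs z) ltac:(lra)).
    pose proof (cosh_le_quartic (Rabs z) ltac:(lra)).
    pose proof (pow2_ge_0 (Rabs z ^ 2)).
    apply Rabs_le_between. rewrite <- cosh_abs, Hz4, Hz2.
    replace (Rabs z ^ 4) with ((Rabs z ^ 2) ^ 2) in * by ring. lra.
  - intros z. now rewrite cosh_opp.
  - intros x y Hxy _. pose proof (cosh_le_cosh x y Hxy). lra.
  - intros A B. rewrite cosh_plus_sub_cosh_minus. ring.
  - intros r Hr. apply sinh_pos. lra.
  - intros sg r Hsg Hr. pose proof (sinh_le_cubic (sg * r) ltac:(nra)).
    pose proof (sinh_ge_id r ltac:(lra)).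
    apply Rle_trans with (sg * r + (sg * r) ^ 3 / 3); [assumption |].
    apply Rle_trans with (sg * (1 + r ^ 2 / 3) * r); [| apply Rmult_le_compat_l; nra].
    assert (0 <= r ^ 3 * (sg - sg ^ 3)) by (apply Rmult_le_pos; [apply pow_le |]; nra).
    lra.
  - intros z _. replace (1 + (cosh z - 1)) with (cosh (Rabs z)) by (rewrite cosh_abs; ring).
    apply arcosh_cosh, Rabs_pos.
  - intros x th Hx Hth Hle. rewrite <- (arcosh_cosh th) by lra. apply arcosh_le. lra.
Qed.

Lemma flat_chart : model_chart 0 1 (fun z => z ^ 2 / 2) (fun z => z) (fun x => sqrt (2 * x))
  (fun th k q => (th * k, th * q, 0)).
Proof.
  split; cbv beta.
  - lra.
  - intros th k q _. left. split; reflexivity.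
  - intros k q. now rewrite !Rmult_0_l.
  - intros th th' k q k' q' Hkq Hkq'. unfold model_dist.
    destruct (Req_EM_T 0 0) as [_ | []]; [| reflexivity].
    rewrite Rmult_1_l. f_equal.
    transitivity (th ^ 2 * (k ^ 2 + q ^ 2) + th' ^ 2 * (k' ^ 2 + q' ^ 2)
                  - 2 * th * th' * (k * k' + q * q'));
      [ring | rewrite Hkq, Hkq'; field].
Qed.

Lemma Rinv_sqrt_sq x : 0 < x -> x * (/ sqrt x * / sqrt x) = 1.
Proof. intros Hx. rewrite <- Rinv_mult, sqrt_sqrt by lra. field. lra. Qed.

Lemma sphere_chart kappa : 0 < kappa ->
  let rho := / sqrt kappa in
  model_chart kappa rho (fun z => 1 - cos z) sin (fun x => acos (1 - x))
    (fun th k q => (rho * (sin th * k), rho * (sin th * q), rho * cos th)).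
Proof.
  intros Hk rho. pose proof (Rinv_sqrt_sq kappa Hk) as Hrho. fold rho in Hrho.
  split; cbv beta.
  - apply Rinv_0_lt_compat, sqrt_lt_R0, Hk.
  - intros th k q Hkq. right; left. split; [assumption |].
    apply (Rmult_eq_reg_l kappa); [| lra]. field_simplify; [| lra].
    transitivity (kappa * (rho * rho) * (sin th ^ 2 * (k ^ 2 + q ^ 2) + cos th ^ 2)); [ring |].
    rewrite Hrho, Hkq, Rmult_1_r, Rmult_1_l. pose proof (sin2_cos2 th). unfold Rsqr in *. nra.
  - intros k q. now rewrite sin_0, !Rmult_0_l.
  - intros th th' k q k' q' _ _. unfold model_dist.
    destruct (Req_EM_T kappa 0) as [| _]; [lra |]. destruct (Rlt_dec 0 kappa) as [_ |]; [| lra].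
    fold rho. f_equal. f_equal.
    transitivity (kappa * (rho * rho) * (sin th * sin th' * (k * k' + q * q') + cos th * cos th'));
      [ring | rewrite Hrho, cos_minus; ring].
Qed.

Lemma hyperbolic_chart kappa : kappa < 0 ->
  let rho := / sqrt (- kappa) in
  model_chart kappa rho (fun z => cosh z - 1) sinh (fun x => arcosh (1 + x))
    (fun th k q => (rho * (sinh th * k), rho * (sinh th * q), rho * cosh th)).
Proof.
  intros Hk rho. pose proof (Rinv_sqrt_sq (- kappa) ltac:(lra)) as Hrho. fold rho in Hrho.
  assert (Hrho0 : 0 < rho) by (apply Rinv_0_lt_compat, sqrt_lt_R0; lra).
  split; cbv beta.
  - exact Hrho0.
  - intros th k q Hkq. right; right. split; [assumption | split].
    + apply (Rmult_eq_reg_l (- kappa)); [| lra]. field_simplify; [| lra].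
      transitivity (- kappa * (rho * rho) * (sinh th ^ 2 * (k ^ 2 + q ^ 2) - cosh th ^ 2));
        [ring |].
      rewrite Hrho, Hkq. replace (- kappa / kappa) with (-1) by (field; lra).
      pose proof (cosh_sq_sub_sinh_sq th). lra.
    + pose proof (cosh_ge_1 th). nra.
  - intros k q. now rewrite sinh_0, !Rmult_0_l.
  - intros th th' k q k' q' _ _. unfold model_dist.
    destruct (Req_EM_T kappa 0) as [| _]; [lra |]. destruct (Rlt_dec 0 kappa) as [| _]; [lra |].
    fold rho. f_equal. f_equal.
    transitivity (- kappa * (rho * rho)
                  * (cosh th * cosh th' - sinh th * sinh th' * (k * k' + q * q')));
      [ring | rewrite Hrho, cosh_minus; ring].
Qed.

Lemma small_comparison_triangles_exist kappa a b eps : 0 < a -> 0 < b -> 0 < eps ->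
  small_comparison_triangles kappa a b eps.
Proof.
  intros Ha Hb Heps. destruct (Rtotal_order kappa 0) as [Hk | [-> | Hk]].
  - exact (chart_small_comparison _ _ _ _ _ _ hyperbolic_profile (hyperbolic_chart kappa Hk)
             a b eps Ha Hb Heps).
  - exact (chart_small_comparison _ _ _ _ _ _ flat_profile flat_chart a b eps Ha Hb Heps).
  - exact (chart_small_comparison _ _ _ _ _ _ sphere_profile (sphere_chart kappa Hk)
             a b eps Ha Hb Heps).
Qed.

(** * One-sided limits *)

Lemma right_lim_is_filterlim f l : right_lim_is f l <-> filterlim f (at_right 0) (locally l).
Proof.
  rewrite filterlim_locally. split.
  - intros H eps. destruct (H eps (cond_pos eps)) as [delta [Hdelta Hf]].
    exists (mkposreal delta Hdelta). intros t Ht Hpos. apply Hf.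
    change (Rabs (t - 0) < delta) in Ht. rewrite Rminus_0_r, Rabs_right in Ht; lra.
  - intros H eps Heps. destruct (H (mkposreal eps Heps)) as [[delta Hdelta] Hf].
    exists delta. split; [exact Hdelta |]. intros t Ht. apply Hf; [| lra].
    change (Rabs (t - 0) < delta). rewrite Rminus_0_r, Rabs_right; lra.
Qed.

Lemma right_lim0_spec f l : right_lim_is f l -> right_lim0 f = l.
Proof.
  intros H. unfold right_lim0.
  assert (Hex : exists l, right_lim_is f l) by (exists l; exact H).
  pose proof (epsilon_spec (inhabits 0) _ Hex) as Hspec.
  rewrite right_lim_is_filterlim in H, Hspec.
  exact (filterlim_locally_unique (F := at_right 0) f _ _ Hspec H).
Qed.

Lemma right_lim_le f g lf lg : (forall t, 0 < t -> f t <= g t) ->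
  right_lim_is f lf -> right_lim_is g lg -> lf <= lg.
Proof.
  intros Hfg Hf Hg. rewrite right_lim_is_filterlim in Hf, Hg.
  apply (filterlim_le (F := at_right 0) f g lf lg); auto.
  exists (mkposreal 1 Rlt_0_1). intros t _ Ht. now apply Hfg.
Qed.

Lemma right_lim_plus f g lf lg : right_lim_is f lf -> right_lim_is g lg ->
  right_lim_is (fun t => f t + g t) (lf + lg).
Proof.
  rewrite !right_lim_is_filterlim. intros Hf Hg.
  exact (filterlim_comp_2 f g Rplus Hf Hg (filterlim_plus lf lg)).
Qed.

Lemma right_lim_eventually_const f l delta : 0 < delta ->
  (forall t, 0 < t < delta -> f t = l) -> right_lim_is f l.
Proof.
  intros Hdelta Hf eps Heps. exists delta. split; [exact Hdelta |].
  intros t Ht. rewrite Hf, Rminus_diag, Rabs_R0 by exact Ht. exact Heps.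
Qed.

Lemma right_lim_of_almost_monotone (f : R -> R) delta B : 0 < delta ->
  (forall t, 0 < t < delta -> 0 <= f t <= B) ->
  (forall e, 0 < e -> exists tau, 0 < tau /\ forall s t, 0 < s < t -> t < tau -> f s <= f t + e) ->
  exists l, right_lim_is f l.
Proof.
  intros Hdelta Hbound Hmono.
  set (eventual_ub := fun u => exists tau, 0 < tau /\ forall t, 0 < t < tau -> f t <= u).
  (* The limit is the infimum of the eventual upper bounds of [f] at [0+]. *)
  destruct (completeness (fun x => forall u, eventual_ub u -> x <= u))
    as [l [Hl_ub Hl_least]].
  - exists B. intros x Hx. apply Hx. exists delta. split; [exact Hdelta |].
    intros t Ht. apply Hbound, Ht.
  - exists 0. intros u [tau [Htau Hu]].
    set (t := Rmin tau delta / 2).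
    pose proof (Rmin_glb_lt tau delta 0 Htau Hdelta).
    pose proof (Rmin_l tau delta). pose proof (Rmin_r tau delta).
    assert (Ht : 0 < t < Rmin tau delta) by (unfold t; lra).
    specialize (Hu t ltac:(lra)). specialize (Hbound t ltac:(lra)). lra.
  - exists l. intros e He.
    assert (Hclose : exists u, eventual_ub u /\ u < l + e).
    { apply not_all_not_ex. intros Hnone.
      enough (l + e <= l) by lra. apply Hl_ub. intros u Hu.
      destruct (Rlt_le_dec u (l + e)) as [Hlt | Hle]; [exfalso; now apply (Hnone u) | exact Hle]. }
    destruct Hclose as [u [[tau [Htau Hu]] Hul]].
    destruct (Hmono (e / 2) ltac:(lra)) as [tau' [Htau' Hm]].
    exists (Rmin tau tau'). split; [now apply Rmin_glb_lt |].
    intros t Ht. pose proof (Rmin_l tau tau'). pose proof (Rmin_r tau tau').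
    assert (Hupper : f t < l + e) by (specialize (Hu t ltac:(lra)); lra).
    assert (Hlower : l <= f t + e / 2).
    { apply Hl_least. intros x Hx. apply Hx. exists t. split; [lra |].
      intros s Hs. apply Hm; lra. }
    apply Rabs_def1; lra.
Qed.

Lemma seq_lim_spec u l : Un_cv u l -> seq_lim u = l.
Proof.
  intros H. unfold seq_lim. apply (UL_sequence u); [| exact H].
  apply (epsilon_spec (inhabits 0) (Un_cv u)). exists l. exact H.
Qed.

(** * Geodesics in locally CAT(kappa) spaces *)

Section Metric.
Variables (Y : Type) (d : Y -> Y -> R).
Hypothesis Hmet : is_metric d.

Lemma metric_eq0 x y : d x y = 0 <-> x = y.
Proof. apply Hmet. Qed.

Lemma metric_refl x : d x x = 0.
Proof. now apply metric_eq0. Qed.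

Lemma metric_sym x y : d x y = d y x.
Proof. apply Hmet. Qed.

Lemma metric_triangle x y z : d x z <= d x y + d y z.
Proof. apply Hmet. Qed.

Lemma metric_nonneg x y : 0 <= d x y.
Proof. pose proof (metric_triangle x y x). rewrite metric_refl, (metric_sym y x) in H. lra. Qed.

Lemma geod_reverse g a b : geod d g a b -> geod d (fun s => g (1 - s)) b a.
Proof.
  intros [H0 [H1 Hg]]. split; [now rewrite Rminus_0_r | split; [now rewrite Rminus_diag |]].
  intros s t Hs Ht. rewrite Hg by lra. rewrite metric_sym.
  replace (1 - s - (1 - t)) with (- (s - t)) by ring. now rewrite Rabs_Ropp.
Qed.

Lemma geod_of_speed g c e t : 0 < t < e ->
  (forall s s', 0 <= s < e -> 0 <= s' < e -> d (g s) (g s') = c * Rabs (s - s')) ->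
  geod d (fun s => g (s * t)) (g 0) (g t) /\ d (g 0) (g t) = c * t.
Proof.
  intros Ht Hg.
  assert (Hend : d (g 0) (g t) = c * t).
  { rewrite Hg by lra. rewrite Rminus_0_l, Rabs_Ropp, Rabs_right by lra. ring. }
  split; [| exact Hend].
  split; [now rewrite Rmult_0_l | split; [now rewrite Rmult_1_l |]].
  intros s s' Hs Hs'. rewrite Hg by nra. rewrite Hend.
  replace (s * t - s' * t) with ((s - s') * t) by ring.
  rewrite Rabs_mult, (Rabs_right t) by lra. ring.
Qed.

Lemma geod_in_ball (U : Y -> Prop) g a b : geod d g a b -> (forall z, d a z <= d a b -> U z) ->
  geod_in U g.
Proof.
  intros [H0 [_ Hg]] HU s Hs. apply HU. rewrite <- H0 at 1. rewrite Hg by lra.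
  rewrite Rminus_0_l, Rabs_Ropp, Rabs_right by lra. pose proof (metric_nonneg a b). nra.
Qed.

Lemma geod_in_reverse (U : Y -> Prop) g : geod_in U g -> geod_in U (fun s => g (1 - s)).
Proof. intros HU s Hs. apply HU. lra. Qed.

Lemma CAT_vertex_comparison kappa U p q r g1 g3 :
  CAT_set d kappa U -> geod d g1 p q -> geod d g3 r p -> geod_in U g1 -> geod_in U g3 ->
  lt_Dk kappa (d q r) -> lt_2Dk kappa (d p q + d q r + d r p) ->
  forall P Q Rr X Z sg, model_pt kappa P -> model_pt kappa Q -> model_pt kappa Rr ->
  model_dist kappa P Q = d p q -> model_dist kappa Q Rr = d q r -> model_dist kappa Rr P = d r p ->
  0 <= sg <= 1 -> on_model_seg kappa P Q sg X -> on_model_seg kappa Rr P (1 - sg) Z ->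
  d (g1 sg) (g3 (1 - sg)) <= model_dist kappa X Z.
Proof.
  intros [Hgeo Hcomp] Hg1 Hg3 HU1 HU3 HDk H2Dk P Q Rr X Z sg HP HQ HR HPQ HQR HRP Hsg HX HZ.
  assert (HUq : U q) by (destruct Hg1 as [_ [<- _]]; apply HU1; lra).
  assert (HUr : U r) by (destruct Hg3 as [<- _]; apply HU3; lra).
  destruct (Hgeo q r HUq HUr HDk) as [g2 [Hg2 HU2]].
  exact (Hcomp p q r g1 g2 g3 Hg1 Hg2 Hg3 HU1 HU2 HU3 H2Dk P Q Rr HP HQ HR HPQ HQR HRP
           0%nat 2%nat sg (1 - sg) X Z ltac:(lia) ltac:(lia) Hsg ltac:(lra) HX HZ).
Qed.

End Metric.

Lemma lt_Dk_of_small kappa p : 0 <= p -> p * (sqrt (Rabs kappa) + 1) < PI ->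
  (forall p', p' <= p -> lt_Dk kappa p') /\ (forall p', p' <= 2 * p -> lt_2Dk kappa p').
Proof.
  intros Hp Hsmall. destruct (Rle_dec kappa 0) as [Hk | Hk].
  - split; intros; now left.
  - rewrite Rabs_right in Hsmall by lra.
    assert (Hs : 0 < sqrt kappa) by (apply sqrt_lt_R0; lra).
    assert (Hlt : p < PI / sqrt kappa) by (apply Rlt_div_r; nra).
    split; intros p' Hp'; right; lra.
Qed.

Section Germs.
Variables (Y : Type) (d : Y -> Y -> R) (kappa : R).
Hypothesis Hmet : is_metric d.
Variables (y : Y) (g h : R -> Y) (e a b : R).
Hypotheses (Ha : 0 < a) (Hb : 0 < b) (He : 0 < e) (Hg0 : g 0 = y) (Hh0 : h 0 = y)
  (Hg : forall s t, 0 <= s < e -> 0 <= t < e -> d (g s) (g t) = a * Rabs (s - t))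
  (Hh : forall s t, 0 <= s < e -> 0 <= t < e -> d (h s) (h t) = b * Rabs (s - t)).

Lemma germ_chord_bounds t : 0 < t < e ->
  d y (g t) = a * t /\ d y (h t) = b * t /\
  Rabs (a - b) * t <= d (g t) (h t) <= (a + b) * t.
Proof.
  intros Ht.
  destruct (geod_of_speed Y d g a e t Ht Hg) as [_ Hgt].
  destruct (geod_of_speed Y d h b e t Ht Hh) as [_ Hht].
  rewrite Hg0 in Hgt. rewrite Hh0 in Hht.
  pose proof (metric_triangle Y d Hmet (g t) y (h t)) as T1.
  pose proof (metric_triangle Y d Hmet y (g t) (h t)) as T2.
  pose proof (metric_triangle Y d Hmet y (h t) (g t)) as T3.
  rewrite (metric_sym Y d Hmet (g t) y) in T1. rewrite (metric_sym Y d Hmet (h t) (g t)) in T3.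
  repeat split; [assumption | assumption | | lra].
  replace (Rabs (a - b) * t) with (Rabs (a * t - b * t))
    by (rewrite <- Rmult_minus_distr_r, Rabs_mult, (Rabs_right t); lra).
  apply Rabs_le_between. lra.
Qed.

(** The comparison triangle of [y, g t, h t] bounds [d (g s) (h s)] through the points at
    fraction [s / t] of its two sides issuing from [y]. *)
Lemma germ_ratio_comparison U r eps tm s t :
  CAT_set d kappa U -> (forall z, d y z < r -> U z) ->
  comparison_triangles_below kappa a b eps tm ->
  0 < s < t -> t < e -> t < tm -> (a + b) * t < r ->
  (a + b) * t * (sqrt (Rabs kappa) + 1) < PI ->
  d (g s) (h s) / s <= d (g t) (h t) / t + eps.
Proof.
  intros HU HUr Hcomp Hs Hte Htm Htr HtPI.
  destruct (geod_of_speed Y d g a e t ltac:(lra) Hg) as [Hg1 _].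
  destruct (geod_of_speed Y d h b e t ltac:(lra) Hh) as [Hh1 _].
  rewrite Hg0 in Hg1. rewrite Hh0 in Hh1.
  destruct (germ_chord_bounds t ltac:(lra)) as [Hgt [Hht Hc]].
  set (c := d (g t) (h t)) in *.
  assert (HUball : forall z, d y z <= (a + b) * t -> U z) by (intros z Hz; apply HUr; lra).
  assert (HU1 : geod_in U (fun u => g (u * t))).
  { apply (geod_in_ball Y d Hmet U _ y (g t) Hg1). intros z Hz. apply HUball. nra. }
  assert (HU3 : geod_in U (fun u => h ((1 - u) * t))).
  { apply (geod_in_reverse Y U (fun u => h (u * t))).
    apply (geod_in_ball Y d Hmet U _ y (h t) Hh1). intros z Hz. apply HUball. nra. }
  set (sg := s / t).
  assert (Hsg : 0 < sg < 1)
    by (unfold sg; split; [apply Rdiv_lt_0_compat | apply Rlt_div_l]; lra).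
  destruct (Hcomp t c sg ltac:(lra) Hc Hsg)
    as [P [Q [Rr [X [Z [HP [HQ [HR [HPQ [HQR [HRP [HX [HZ HXZ]]]]]]]]]]]]].
  destruct (lt_Dk_of_small kappa ((a + b) * t) ltac:(nra) HtPI) as [HDk H2Dk].
  pose proof (CAT_vertex_comparison Y d kappa U y (g t) (h t) _ _ HU Hg1
    (geod_reverse Y d Hmet _ _ _ Hh1) HU1 HU3 (HDk c ltac:(lra))
    (H2Dk (d y (g t) + d (g t) (h t) + d (h t) y)
       ltac:(rewrite (metric_sym Y d Hmet (h t) y); fold c; lra))
    P Q Rr X Z sg HP HQ HR ltac:(lra) HQR ltac:(rewrite (metric_sym Y d Hmet); lra)
    ltac:(lra) HX HZ) as Hcmp.
  cbv beta in Hcmp.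
  replace (sg * t) with s in Hcmp by (unfold sg; field; lra).
  replace ((1 - (1 - sg)) * t) with s in Hcmp by (unfold sg; field; lra).
  apply Rle_div_l; [lra |].
  replace ((c / t + eps) * s) with (sg * (c + eps * t)) by (unfold sg; field; lra).
  lra.
Qed.

Lemma germ_ratio_almost_monotone : locally_CAT d kappa ->
  forall eps, 0 < eps -> exists tau, 0 < tau /\ forall s t, 0 < s < t -> t < tau ->
    d (g s) (h s) / s <= d (g t) (h t) / t + eps.
Proof.
  intros Hcat eps Heps.
  destruct (Hcat y) as [U [HU [r [Hr HUr]]]].
  destruct (small_comparison_triangles_exist kappa a b eps Ha Hb Heps) as [tm [Htm Hcomp]].
  set (L := (sqrt (Rabs kappa) + 1) * (a + b)).
  assert (HL : 0 < L) by (unfold L; pose proof (sqrt_pos (Rabs kappa)); nra).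
  set (tau := Rmin (Rmin e tm) (Rmin (r / (a + b)) (PI / L))).
  assert (Htau : tau <= e /\ tau <= tm /\ tau <= r / (a + b) /\ tau <= PI / L).
  { unfold tau. pose proof (Rmin_l (Rmin e tm) (Rmin (r / (a + b)) (PI / L))).
    pose proof (Rmin_r (Rmin e tm) (Rmin (r / (a + b)) (PI / L))).
    pose proof (Rmin_l e tm). pose proof (Rmin_r e tm).
    pose proof (Rmin_l (r / (a + b)) (PI / L)). pose proof (Rmin_r (r / (a + b)) (PI / L)).
    lra. }
  exists tau. split.
  { pose proof PI_RGT_0. unfold tau.
    repeat apply Rmin_glb_lt; auto; apply Rdiv_lt_0_compat; lra. }
  intros s t Hs Ht.
  apply (germ_ratio_comparison U r eps tm); auto; try lra.
  - rewrite Rmult_comm. apply Rlt_div_r; lra.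
  - replace ((a + b) * t * (sqrt (Rabs kappa) + 1)) with (t * L) by (unfold L; ring).
    apply Rlt_div_r; lra.
Qed.

End Germs.

(** * The tangent cone *)

Lemma Un_cv_const c : Un_cv (fun _ => c) c.
Proof. apply is_lim_seq_Reals, is_lim_seq_const. Qed.

Section TangentCone.
Variables (Y : Type) (d : Y -> Y -> R) (kappa : R).
Hypotheses (Hmet : is_metric d) (Hcat : locally_CAT d kappa).

Lemma germ_ratio_has_limit y g h : germ d y g -> germ d y h ->
  exists l, right_lim_is (fun t => d (g t) (h t) / t) l.
Proof.
  intros [Hg0 [e1 [a [He1 [Ha Hg]]]]] [Hh0 [e2 [b [He2 [Hb Hh]]]]].
  assert (He : 0 < Rmin e1 e2) by now apply Rmin_glb_lt.
  pose proof (Rmin_l e1 e2). pose proof (Rmin_r e1 e2).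
  set (e := Rmin e1 e2) in *.
  assert (Hg' : forall s t, 0 <= s < e -> 0 <= t < e -> d (g s) (g t) = a * Rabs (s - t))
    by (intros; apply Hg; lra).
  assert (Hh' : forall s t, 0 <= s < e -> 0 <= t < e -> d (h s) (h t) = b * Rabs (s - t))
    by (intros; apply Hh; lra).
  pose proof (germ_chord_bounds Y d Hmet y g h e a b Hg0 Hh0 Hg' Hh') as Hchord.
  destruct Ha as [Ha | <-]; [destruct Hb as [Hb | <-] |].
  - apply (right_lim_of_almost_monotone _ e (a + b)); [exact He | |].
    + intros t Ht. destruct (Hchord t Ht) as [_ [_ Hc]]. pose proof (Rabs_pos (a - b)).
      split; [apply Rdiv_le_0_compat | apply Rle_div_l]; nra.
    + exact (germ_ratio_almost_monotone Y d kappa Hmet y g h e a b Ha Hb He Hg0 Hh0 Hg' Hh' Hcat).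
  - exists a. apply (right_lim_eventually_const _ _ e He). intros t Ht.
    destruct (Hchord t Ht) as [Hgt [Hht _]].
    assert (Hy : h t = y) by (symmetry; apply (metric_eq0 Y d Hmet); lra).
    rewrite Hy, (metric_sym Y d Hmet), Hgt. field. lra.
  - exists b. apply (right_lim_eventually_const _ _ e He). intros t Ht.
    destruct (Hchord t Ht) as [Hgt [Hht _]].
    assert (Hy : g t = y) by (symmetry; apply (metric_eq0 Y d Hmet); lra).
    rewrite Hy, Hht. field. lra.
Qed.

Lemma dgerm_spec y g h : germ d y g -> germ d y h ->
  right_lim_is (fun t => d (g t) (h t) / t) (dgerm d g h).
Proof.
  intros Hg Hh. destruct (germ_ratio_has_limit y g h Hg Hh) as [l Hl].
  unfold dgerm. now rewrite (right_lim0_spec _ l Hl).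
Qed.

Lemma dgerm_sym g h : dgerm d g h = dgerm d h g.
Proof.
  unfold dgerm. f_equal. apply functional_extensionality. intros t.
  now rewrite (metric_sym Y d Hmet).
Qed.

Lemma dgerm_triangle y g h k : germ d y g -> germ d y h -> germ d y k ->
  dgerm d g k <= dgerm d g h + dgerm d h k.
Proof.
  intros Hg Hh Hk.
  apply (right_lim_le (fun t => d (g t) (k t) / t)
                      (fun t => d (g t) (h t) / t + d (h t) (k t) / t)).
  - intros t Ht. rewrite <- Rdiv_plus_distr. apply Rmult_le_compat_r.
    + left. now apply Rinv_0_lt_compat.
    + apply (metric_triangle Y d Hmet).
  - now apply (dgerm_spec y).
  - apply right_lim_plus; now apply (dgerm_spec y).
Qed.

Lemma dgerm_nonneg y g h : germ d y g -> germ d y h -> 0 <= dgerm d g h.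
Proof.
  intros Hg Hh. apply (right_lim_le (fun _ => 0) (fun t => d (g t) (h t) / t)).
  - intros t Ht. apply Rdiv_le_0_compat; [apply (metric_nonneg Y d Hmet) | exact Ht].
  - apply (right_lim_eventually_const _ _ 1); [lra | reflexivity].
  - now apply (dgerm_spec y).
Qed.

Lemma germ_const y : germ d y (fun _ => y).
Proof.
  split; [reflexivity |]. exists 1, 0. repeat split; try lra.
  intros s t _ _. rewrite (metric_refl Y d Hmet). ring.
Qed.

Lemma germ_of_geod g y z : geod d g y z -> germ d y g.
Proof.
  intros [H0 [_ Hg]]. split; [exact H0 |]. exists 1, (d y z).
  repeat split; [lra | apply (metric_nonneg Y d Hmet) |].
  intros s t Hs Ht. rewrite Hg by lra. ring.
Qed.

Lemma dgerm_geod_base g y z : geod d g y z -> dgerm d g (fun _ => y) = d y z.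
Proof.
  intros [H0 [_ Hg]]. unfold dgerm. apply right_lim0_spec.
  apply (right_lim_eventually_const _ _ 1); [lra |]. intros t Ht.
  rewrite <- H0 at 1. rewrite Hg by lra. rewrite Rminus_0_r, Rabs_right by lra. field. lra.
Qed.

Lemma tvec_dgerm_cv y v w : tvec d y v -> germ d y w ->
  exists l, Un_cv (fun n => dgerm d (v n) w) l.
Proof.
  intros [Hv Hcauchy] Hw.
  assert (Hc : Cauchy_crit (fun n => dgerm d (v n) w)).
  { intros eps Heps. destruct (Hcauchy eps Heps) as [N HN]. exists N.
    intros m n Hm Hn. unfold Rdist. specialize (HN m n Hm Hn).
    pose proof (dgerm_triangle y (v m) (v n) w (Hv m) (Hv n) Hw).
    pose proof (dgerm_triangle y (v n) (v m) w (Hv n) (Hv m) Hw).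
    rewrite (dgerm_sym (v n) (v m)) in *. apply Rabs_def1; lra. }
  destruct (Rcomplete.R_complete _ Hc) as [l Hl]. now exists l.
Qed.

Lemma tinner_geod_le y v g z : tvec d y v -> geod d g y z ->
  0 <= tnorm d y v /\ tinner d y v (tclass g) <= tnorm d y v * d y z.
Proof.
  intros Hv Hg. pose proof (germ_of_geod g y z Hg) as Gg. pose proof (germ_const y) as G0.
  pose proof (proj1 Hv) as Hvn. pose proof (dgerm_geod_base g y z Hg) as Hgy.
  destruct (tvec_dgerm_cv y v (fun _ => y) Hv G0) as [N HN].
  destruct (tvec_dgerm_cv y v g Hv Gg) as [T HT].
  assert (EN : tnorm d y v = N) by (apply seq_lim_spec; exact HN).
  assert (EG : tnorm d y (tclass g) = d y z).
  { apply seq_lim_spec. unfold tclass, tzero. rewrite Hgy. apply Un_cv_const. }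
  assert (ET : tdist d v (tclass g) = T) by (apply seq_lim_spec; exact HT).
  assert (HN0 : 0 <= N).
  { apply (Rle_cv_lim (Un := fun _ => 0) (Vn := fun n => dgerm d (v n) (fun _ => y)));
      auto using Un_cv_const.
    intros n. now apply (dgerm_nonneg y). }
  assert (HNT : N - d y z <= T).
  { apply (Rle_cv_lim (Un := fun n => dgerm d (v n) (fun _ => y) - d y z)
                      (Vn := fun n => dgerm d (v n) g));
      auto using CV_minus, Un_cv_const.
    intros n. pose proof (dgerm_triangle y (v n) g (fun _ => y) (Hvn n) Gg G0) as Htri.
    rewrite Hgy in Htri. lra. }
  assert (HTN : d y z - N <= T).
  { apply (Rle_cv_lim (Un := fun n => d y z - dgerm d (v n) (fun _ => y))
                      (Vn := fun n => dgerm d (v n) g));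
      auto using CV_minus, Un_cv_const.
    intros n. pose proof (dgerm_triangle y g (v n) (fun _ => y) Gg (Hvn n) G0) as Htri.
    rewrite Hgy, (dgerm_sym g (v n)) in Htri. lra. }
  split; [lra |].
  unfold tinner. rewrite EN, EG, ET.
  assert ((N - d y z) ^ 2 <= T ^ 2).
  { rewrite <- (pow2_abs (N - d y z)). apply pow_incr. split; [apply Rabs_pos |].
    apply Rabs_le_between. lra. }
  lra.
Qed.

End TangentCone.

(** * The slope *)

Lemma Lub_Rbar_bounded (S : R -> Prop) B : S 0 -> (forall q, S q -> q <= B) ->
  exists s, Lub_Rbar S = Finite s /\ 0 <= s <= B.
Proof.
  intros H0 HB. destruct (Lub_Rbar_correct S) as [Hub Hleast].
  assert (Hle : Rbar_le (Lub_Rbar S) B) by (apply Hleast; intros q Hq; apply HB, Hq).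
  assert (Hge : Rbar_le 0 (Lub_Rbar S)) by (apply Hub, H0).
  destruct (Lub_Rbar S) as [s | |]; try contradiction. now exists s.
Qed.

Section Slope.
Variables (Y : Type) (d : Y -> Y -> R) (E : Y -> Rbar).

Lemma slope_le_of_quot_bound y N K : 0 <= N -> 0 <= K ->
  (forall r z, 0 < r -> 0 < d y z < r -> slope_quot d E y z <= N + K * r) ->
  Rbar_le (slope d E y) N /\ is_finite (slope d E y).
Proof.
  intros HN HK Hquot.
  set (Sr := fun r q => q = 0 \/ exists z, 0 < d y z < r /\ q = slope_quot d E y z).
  assert (HSr : forall r, 0 < r -> exists s, Lub_Rbar (Sr r) = Finite s /\ 0 <= s <= N + K * r).
  { intros r Hr. apply Lub_Rbar_bounded; [now left |].
    intros q [-> | [z [Hz ->]]]; [nra | now apply Hquot]. }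
  set (SL := fun s => exists r, 0 < r /\ Lub_Rbar (Sr r) = Finite s).
  change (slope d E y) with (Glb_Rbar SL).
  destruct (Glb_Rbar_correct SL) as [Hlb Hgreatest].
  assert (Hpos : Rbar_le 0 (Glb_Rbar SL)).
  { apply Hgreatest. intros s [r [Hr Hs]]. destruct (HSr r Hr) as [s' [Hs' Hb]].
    rewrite Hs in Hs'. injection Hs' as ->. simpl. lra. }
  assert (Hup : forall r, 0 < r -> Rbar_le (Glb_Rbar SL) (N + K * r)).
  { intros r Hr. destruct (HSr r Hr) as [s [Hs Hb]].
    apply Rbar_le_trans with s; [apply Hlb; now exists r | simpl; lra]. }
  destruct (Glb_Rbar SL) as [g | |]; simpl in *; try contradiction.
  - split; [| reflexivity].
    destruct (Rle_lt_dec g N) as [| Hlt]; [assumption |].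
    specialize (Hup ((g - N) / (2 * (K + 1))) ltac:(apply Rdiv_lt_0_compat; lra)).
    assert (K * ((g - N) / (2 * (K + 1))) < g - N).
    { replace (K * ((g - N) / (2 * (K + 1)))) with ((g - N) * (K / (2 * (K + 1))))
        by (field; lra).
      assert (K / (2 * (K + 1)) < 1) by (apply Rlt_div_l; lra). nra. }
    lra.
  - destruct (Hup 1 Rlt_0_1).
Qed.
End Slope.

Section Subdifferential.
Variables (Y : Type) (d : Y -> Y -> R) (kappa lam : R) (E : Y -> Rbar).
Hypotheses (Hmet : is_metric d) (Hcat : locally_CAT d kappa).

Lemma subdiff_slope_quot_le y v z : minus_subdiff d lam E y v -> 0 < d y z ->
  slope_quot d E y z <= tnorm d y v + Rabs lam / 2 * d y z.
Proof.
  intros [_ [Hv Hsub]] Hz. destruct (Hsub z) as [g [Hg Hle]].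
  destruct (tinner_geod_le Y d kappa Hmet Hcat y v g z Hv Hg) as [HN Hinner].
  assert (Hlam : - (lam / 2 * d y z ^ 2) <= Rabs lam / 2 * d y z ^ 2).
  { pose proof (pow2_ge_0 (d y z)). pose proof (Rle_abs (- lam)). rewrite Rabs_Ropp in *. nra. }
  pose proof (Rabs_pos lam).
  unfold slope_quot. destruct (E z) as [ez | |]; simpl in Hle; [| nra | contradiction].
  apply Rle_div_l; [lra |]. apply Rmax_lub; nra.
Qed.

Lemma subdiff_slope_le y v : minus_subdiff d lam E y v ->
  Rbar_le (slope d E y) (tnorm d y v) /\ is_finite (slope d E y).
Proof.
  intros Hv.
  assert (HN : 0 <= tnorm d y v).
  { destruct Hv as [_ [Hv Hsub]]. destruct (Hsub y) as [g [Hg _]].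
    exact (proj1 (tinner_geod_le Y d kappa Hmet Hcat y v g y Hv Hg)). }
  apply (slope_le_of_quot_bound Y d E y _ (Rabs lam / 2) HN); [pose proof (Rabs_pos lam); lra |].
  intros r z Hr Hz. pose proof (Rabs_pos lam).
  pose proof (subdiff_slope_quot_le y v z Hv ltac:(lra)). nra.
Qed.

End Subdifferential.

Theorem proposition3p9 (kappa lam : R) (Y : Type) (d : Y -> Y -> R) (E : Y -> Rbar)
  (Hmet : is_metric d) (Hcomp : complete d) (Hgeo : geodesic_space d)
  (Hcat : locally_CAT d kappa)
  (HE : forall y, E y <> m_infty)
  (Hconv : lambda_convex d lam E) (Hlsc : lsc d E) :
  forall y, in_dom_subdiff d lam E y ->
    Rbar_le (slope d E y)
            (Glb_Rbar (fun a => exists v, minus_subdiff d lam E y v /\ a = tnorm d y v))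
    /\ is_finite (slope d E y).
Proof.
  intros y [_ [v0 Hv0]]. split.
  - apply Glb_Rbar_correct. intros a [v [Hv ->]].
    exact (proj1 (subdiff_slope_le Y d kappa lam E Hmet Hcat y v Hv)).
  - exact (proj2 (subdiff_slope_le Y d kappa lam E Hmet Hcat y v0 Hv0)).
Qed.
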